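(* Let $a,\omega\in\mathbb{R}$ and on $T^*\mathbb{R}^2$ with coordinates ordered as $(p_x,p_y,x,y)$ consider \[H_{\mathrm{SK}}=\tfrac12(p_x^2+p_y^2)+\tfrac{\omega}{2}(x^2+y^2)+axy^2+\tfrac a3x^3,\qquad F_{\mathrm{SK}}=p_xp_y+\omega xy+ax^2y+\tfrac a3y^3.\] Let $X$ be the vector field with components $X^{p_x}=-\frac{xp_x+yp_y}{\sqrt2}$, $X^{p_y}=-\frac{yp_x+xp_y}{\sqrt2}$, $X^x=X^y=0$, let $P_1=\mathcal L_XP_0=-(J_XP_0+P_0J_X^{\top})$ ($J_X$ the Jacobian matrix of $X$), $N=P_1P_0^{-1}$ and $N^*=P_0^{-1}P_1$. Then, with covectors written as column vectors of partial derivatives in the order $(p_x,p_y,x,y)$, \[N^*dH_{\mathrm{SK}}=\tfrac{x}{\sqrt2}\,dH_{\mathrm{SK}}+\tfrac{y}{\sqrt2}\,dF_{\mathrm{SK}},\qquad N^*dF_{\mathrm{SK}}=\tfrac{y}{\sqrt2}\,dH_{\mathrm{SK}}+\tfrac{x}{\sqrt2}\,dF_{\mathrm{SK}},\] so that the control matrix has eigenvalues $u_1=\frac{x+y}{\sqrt2}$, $u_2=\frac{x-y}{\sqrt2}$. Moreover, with $v_1=\frac{p_x+p_y}{\sqrt2}$, $v_2=\frac{p_x-p_y}{\sqrt2}$, one has $p_x\,dx+p_y\,dy=v_1\,du_1+v_2\,du_2$ and \[H_{\mathrm{SK}}=H_1+H_2,\qquad F_{\mathrm{SK}}=H_1-H_2,\qquad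 H_i=\tfrac12v_i^2+\tfrac{\omega}{2}u_i^2+\tfrac{\sqrt2\,a}{3}u_i^3\ (i=1,2),\] so that the Hamilton equations of $H_{\mathrm{SK}}$ split into the two decoupled systems $\ddot u_i+\omega u_i+\sqrt2\,a\,u_i^2=0$, $i=1,2$.
   Context: $P_0$ is the canonical Poisson tensor on $T^*\mathbb{R}^2$, which in the ordering $(p_x,p_y,x,y)$ is the matrix $\begin{pmatrix}0&-I_2\\ I_2&0\end{pmatrix}$, corresponding to the bracket with $\{x,p_x\}_0=\{y,p_y\}_0=1$. *)

From HB Require Import structures.
From mathcomp Require Import all_boot all_order all_algebra.
From mathcomp Require Import all_classical all_reals all_analysis.
Set Implicit Arguments. Unset Strict Implicit. Unset Printing Implicit Defensive.
Import Order.TTheory GRing.Theory Num.Theory.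
Import numFieldNormedType.Exports.
Local Open Scope ring_scope.

Section Defs.
Variable R : realType.

Definition ipx : 'I_4 := inord 0.
Definition ipy : 'I_4 := inord 1.
Definition ix  : 'I_4 := inord 2.
Definition iy  : 'I_4 := inord 3.

Definition cpx (z : 'cV[R]_4) : R := z ipx 0.
Definition cpy (z : 'cV[R]_4) : R := z ipy 0.
Definition cx  (z : 'cV[R]_4) : R := z ix 0.
Definition cy  (z : 'cV[R]_4) : R := z iy 0.

Definition partial (f : 'cV[R]_4 -> R) (i : 'I_4) (z : 'cV[R]_4) : R :=
  derive1 (fun t : R => f (z + t *: delta_mx i 0)) 0.

Definition dif (f : 'cV[R]_4 -> R) (z : 'cV[R]_4) : 'cV[R]_4 :=
  \col_i partial f i z.

Definition jacobian (X : 'cV[R]_4 -> 'cV[R]_4) (z : 'cV[R]_4) : 'M[R]_4 :=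
  \matrix_(i, j) partial (fun w => X w i 0) j z.

Definition P0 : 'M[R]_4 :=
  block_mx (0 : 'M[R]_2) (- 1%:M) 1%:M 0.

Definition s2 : R := Num.sqrt 2.

Definition HSK (a w : R) (z : 'cV[R]_4) : R :=
  2^-1 * (cpx z ^+ 2 + cpy z ^+ 2) + w / 2 * (cx z ^+ 2 + cy z ^+ 2)
  + a * cx z * cy z ^+ 2 + a / 3 * cx z ^+ 3.

Definition FSK (a w : R) (z : 'cV[R]_4) : R :=
  cpx z * cpy z + w * cx z * cy z + a * cx z ^+ 2 * cy z + a / 3 * cy z ^+ 3.

Definition Xf (z : 'cV[R]_4) : 'cV[R]_4 :=
  \col_i (if i == ipx then - ((cx z * cpx z + cy z * cpy z) / s2)
          else if i == ipy then - ((cy z * cpx z + cx z * cpy z) / s2)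
          else 0).

Definition P1 (z : 'cV[R]_4) : 'M[R]_4 :=
  - (jacobian Xf z *m P0 + P0 *m (jacobian Xf z)^T).

Definition Nrec (z : 'cV[R]_4) : 'M[R]_4 := P1 z *m invmx P0.
Definition Nstar (z : 'cV[R]_4) : 'M[R]_4 := invmx P0 *m P1 z.

(* control matrix: N^* dH = c11 dH + c12 dF, N^* dF = c21 dH + c22 dF *)
Definition control_matrix (z : 'cV[R]_4) : 'M[R]_2 :=
  \matrix_(i, j) (if i == j then cx z / s2 else cy z / s2).

Definition u1 (z : 'cV[R]_4) : R := (cx z + cy z) / s2.
Definition u2 (z : 'cV[R]_4) : R := (cx z - cy z) / s2.
Definition v1 (z : 'cV[R]_4) : R := (cpx z + cpy z) / s2.
Definition v2 (z : 'cV[R]_4) : R := (cpx z - cpy z) / s2.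

Definition Hi (a w : R) (u v : R) : R :=
  2^-1 * v ^+ 2 + w / 2 * u ^+ 2 + s2 * a / 3 * u ^+ 3.

End Defs.
Arguments P0 {R}.
Arguments s2 {R}.

(* N^* = - P0 P1 acts on each of the pairs (p_x, p_y) and (x, y) by the
   symmetric matrix [[x, y], [y, x]] / sqrt 2, while dF_SK is dH_SK with both
   pairs swapped; this gives the two recursion relations and the eigenvalues
   (x +- y) / sqrt 2 of the control matrix.  The rotation
   u_{1,2} = (x +- y) / sqrt 2, v_{1,2} = (p_x +- p_y) / sqrt 2 separates H_SK,
   and along a trajectory u_i' = v_i and v_i' = - (w u_i + sqrt 2 a u_i^2). *)

From Pilot Require Import Defs.
From HB Require Import structures.
From mathcomp Require Import all_boot all_order all_algebra.
From mathcomp Require Import all_classical all_reals all_analysis.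
From mathcomp Require Import ring.
Import Order.TTheory GRing.Theory Num.Theory.
Import numFieldNormedType.Exports.
Local Open Scope ring_scope.
Set Implicit Arguments.
Unset Strict Implicit.
Unset Printing Implicit Defensive.

Section SK.
Variable R : realType.
Implicit Types (z : 'cV[R]_4).

Lemma coord_eqE :
  ((ipx == ipy) = false) * ((ipx == ix) = false) * ((ipx == iy) = false) *
  ((ipy == ipx) = false) * ((ipy == ix) = false) * ((ipy == iy) = false) *
  ((ix == ipx) = false) * ((ix == ipy) = false) * ((ix == iy) = false) *
  ((iy == ipx) = false) * ((iy == ipy) = false) * ((iy == ix) = false).
Proof. by rewrite /ipx /ipy /ix /iy; repeat split; rewrite -val_eqE /= !inordK. Qed.

Lemma ord4P (i : 'I_4) : [\/ i = ipx, i = ipy, i = ix | i = iy].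
Proof.
case: i => [[|[|[|[|m]]]] lti] //.
- by apply: Or41; apply: val_inj; rewrite /= inordK.
- by apply: Or42; apply: val_inj; rewrite /= inordK.
- by apply: Or43; apply: val_inj; rewrite /= inordK.
- by apply: Or44; apply: val_inj; rewrite /= inordK.
Qed.

Lemma big_ord4 (F : 'I_4 -> R) : \sum_(j < 4) F j = F ipx + F ipy + F ix + F iy.
Proof.
rewrite !big_ord_recl big_ord0 addr0 !addrA.
by congr (F _ + F _ + F _ + F _); apply: val_inj; rewrite /= inordK.
Qed.

Definition cv4 (a b c d : R) : 'cV[R]_4 := \col_i nth 0 [:: a; b; c; d] i.

Lemma cv4E a b c d :
  (cv4 a b c d ipx 0 = a) * (cv4 a b c d ipy 0 = b) *
  (cv4 a b c d ix 0 = c) * (cv4 a b c d iy 0 = d).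
Proof. by rewrite !mxE /ipx /ipy /ix /iy !inordK. Qed.

Lemma cv4_eta (v : 'cV[R]_4) : v = cv4 (v ipx 0) (v ipy 0) (v ix 0) (v iy 0).
Proof.
apply/matrixP => i k; rewrite ord1.
by case: (ord4P i) => ->; rewrite cv4E.
Qed.

Lemma scale_cv4 k a b c d : k *: cv4 a b c d = cv4 (k * a) (k * b) (k * c) (k * d).
Proof. by apply/matrixP => -[[|[|[|[|?]]]] ?] j; rewrite !mxE. Qed.

Lemma add_cv4 a b c d a' b' c' d' :
  cv4 a b c d + cv4 a' b' c' d' = cv4 (a + a') (b + b') (c + c') (d + d').
Proof. by apply/matrixP => -[[|[|[|[|?]]]] ?] j; rewrite !mxE. Qed.

Lemma mulmx_cv4 (A : 'M[R]_4) a b c d (i : 'I_4) :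
  (A *m cv4 a b c d) i 0 = A i ipx * a + A i ipy * b + A i ix * c + A i iy * d.
Proof. by rewrite mxE big_ord4 !cv4E. Qed.

Lemma is_derive_coord n (z : 'cV[R]_n) (i j : 'I_n) :
  is_derive (0 : R) 1 (fun t => (z + t *: delta_mx i 0) j 0)
    ((delta_mx i 0 : 'cV[R]_n) j 0).
Proof.
rewrite [X in is_derive _ _ X]
  (_ : _ = fun t => z j 0 + t * (delta_mx i 0 : 'cV[R]_n) j 0).
  by apply: is_derive_eq; rewrite /GRing.scale /=; ring.
by apply/funext => t; rewrite !mxE.
Qed.
(* As an instance, this lets [derive_val] differentiate polynomial expressions
   in the coordinates along each axis. *)
Existing Instance is_derive_coord.

Ltac partials_cv4 :=
  rewrite [LHS]cv4_eta !mxE /partial; congr cv4;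
  rewrite derive1E derive_val !mxE ?eqxx ?coord_eqE /GRing.scale /=.

Lemma s2_neq0 : s2 != 0 :> R.
Proof. by rewrite /s2 sqrtr_eq0 -ltNge ltr0n. Qed.

Lemma s2_sqr : s2 ^+ 2 = 2 :> R.
Proof. by rewrite /s2 sqr_sqrtr // ler0n. Qed.

Lemma mul_div_s2 (b c : R) : b / s2 * (c / s2) = b * c / 2.
Proof. by rewrite mulf_div -expr2 s2_sqr. Qed.

Lemma sqr_div_s2 (b : R) : (b / s2) ^+ 2 = b ^+ 2 / 2.
Proof. by rewrite expr_div_n s2_sqr. Qed.

Lemma cube_div_s2 (b : R) : (b / s2) ^+ 3 = b ^+ 3 / (2 * s2).
Proof. by rewrite expr_div_n (exprS s2) s2_sqr (mulrC s2). Qed.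

Lemma dif_HSK (a w : R) z : dif (HSK a w) z =
  cv4 (cpx z) (cpy z) (w * cx z + a * cx z ^+ 2 + a * cy z ^+ 2)
      (w * cy z + 2 * a * cx z * cy z).
Proof. by rewrite /HSK /cpx /cpy /cx /cy; partials_cv4; field. Qed.

Lemma dif_FSK (a w : R) z : dif (FSK a w) z =
  cv4 (cpy z) (cpx z) (w * cy z + 2 * a * cx z * cy z)
      (w * cx z + a * cx z ^+ 2 + a * cy z ^+ 2).
Proof. by rewrite /FSK /cpx /cpy /cx /cy; partials_cv4; field. Qed.

Lemma dif_cx z : dif (@cx R) z = cv4 0 0 1 0.
Proof. by rewrite /cx; partials_cv4. Qed.

Lemma dif_cy z : dif (@cy R) z = cv4 0 0 0 1.
Proof. by rewrite /cy; partials_cv4. Qed.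

Lemma dif_u1 z : dif (@u1 R) z = cv4 0 0 (1 / s2) (1 / s2).
Proof. by rewrite /u1 /cx /cy; partials_cv4; field; exact: s2_neq0. Qed.

Lemma dif_u2 z : dif (@u2 R) z = cv4 0 0 (1 / s2) (- 1 / s2).
Proof. by rewrite /u2 /cx /cy; partials_cv4; field; exact: s2_neq0. Qed.

Lemma symplectic_block_sqr n :
  block_mx 0 (- 1%:M) 1%:M 0 *m block_mx 0 (- 1%:M) 1%:M 0 = - 1%:M :> 'M[R]_(n + n).
Proof.
rewrite mulmx_block !(mul0mx, mulmx0, add0r, addr0) mulmxN !mulmx1.
by rewrite (scalar_mx_block n n 1) opp_block_mx !oppr0.
Qed.

Lemma cv4_col_mx a b c d :
  cv4 a b c d = col_mx (\col_(i < 2) nth 0 [:: a; b] i) (\col_(i < 2) nth 0 [:: c; d] i).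
Proof.
apply/matrixP => i j; rewrite !mxE; by case: splitP => -[[|[|?]] ?] //= ->; rewrite mxE.
Qed.

Lemma P0_cv4 a b c d : P0 *m cv4 a b c d = cv4 (- c) (- d) a b.
Proof.
rewrite /P0 !cv4_col_mx (@mul_block_col _ 2 2 2 2).
rewrite !mul0mx !mul1mx add0r addr0 mulNmx mul1mx.
suff -> : - \col_i [:: c; d]`_i = \col_(i < 2) [:: - c; - d]`_i by [].
by apply/matrixP => -[[|[|?]] ?] j; rewrite !mxE.
Qed.

Lemma P0_sqr : P0 *m P0 = - 1%:M :> 'M[R]_4.
Proof. by rewrite /P0 (symplectic_block_sqr 2). Qed.

Lemma invmx_P0 : invmx P0 = - P0 :> 'M[R]_4.
Proof.
have P0_inv : P0 *m - P0 = 1%:M :> 'M[R]_4 by rewrite mulmxN P0_sqr opprK.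
have [P0_unit _] := mulmx1_unit P0_inv.
by rewrite -[invmx P0]mulmx1 -P0_inv mulmxA mulVmx // mul1mx.
Qed.

Lemma partialE (f : 'cV[R]_4 -> R) i z : partial f i z = dif f z i 0.
Proof. by rewrite mxE. Qed.

Lemma dif_Xf_px z :
  dif (fun w => @Xf R w ipx 0) z = - s2^-1 *: cv4 (cx z) (cy z) (cpx z) (cpy z).
Proof.
rewrite (_ : (fun w => @Xf R w ipx 0) = fun w => - ((cx w * cpx w + cy w * cpy w) / s2)).
  by rewrite scale_cv4 /cx /cy /cpx /cpy; partials_cv4; field; exact: s2_neq0.
by apply/funext => w; rewrite mxE eqxx.
Qed.

Lemma dif_Xf_py z :
  dif (fun w => @Xf R w ipy 0) z = - s2^-1 *: cv4 (cy z) (cx z) (cpy z) (cpx z).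
Proof.
rewrite (_ : (fun w => @Xf R w ipy 0) = fun w => - ((cy w * cpx w + cx w * cpy w) / s2)).
  by rewrite scale_cv4 /cx /cy /cpx /cpy; partials_cv4; field; exact: s2_neq0.
by apply/funext => w; rewrite mxE eqxx coord_eqE.
Qed.

Lemma dif_Xf_eq0 i z : i != ipx -> i != ipy -> dif (fun w => @Xf R w i 0) z = 0.
Proof.
move=> /negbTE ipx_i /negbTE ipy_i.
rewrite (_ : (fun w => @Xf R w i 0) = fun=> 0); last first.
  by apply/funext => w; rewrite mxE ipx_i ipy_i.
by apply/matrixP => j k; rewrite !mxE /partial derive1E derive_val.
Qed.

Lemma jacobian_Xf_mul z p q r s : Defs.jacobian (@Xf R) z *m cv4 p q r s =
  - s2^-1 *: cv4 (cx z * p + cy z * q + cpx z * r + cpy z * s)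
                 (cy z * p + cx z * q + cpy z * r + cpx z * s) 0 0.
Proof.
rewrite [LHS]cv4_eta !mulmx_cv4 !mxE !partialE dif_Xf_px dif_Xf_py.
rewrite !dif_Xf_eq0 ?coord_eqE //.
by rewrite !scale_cv4 !cv4E !mxE; congr cv4; ring.
Qed.

Lemma tr_jacobian_Xf_mul z p q r s : (Defs.jacobian (@Xf R) z)^T *m cv4 p q r s =
  - s2^-1 *: cv4 (cx z * p + cy z * q) (cy z * p + cx z * q)
                 (cpx z * p + cpy z * q) (cpy z * p + cpx z * q).
Proof.
rewrite [LHS]cv4_eta !mulmx_cv4 !mxE !partialE dif_Xf_px dif_Xf_py.
rewrite !dif_Xf_eq0 ?coord_eqE //.
by rewrite !scale_cv4 !cv4E !mxE; congr cv4; ring.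
Qed.

Lemma Nstar_cv4 z p q r s : Nstar z *m cv4 p q r s =
  s2^-1 *: cv4 (cx z * p + cy z * q) (cy z * p + cx z * q)
               (cx z * r + cy z * s) (cy z * r + cx z * s).
Proof.
rewrite /Nstar invmx_P0 /P1 mulNmx mulmxN opprK -mulmxA mulmxDl -!mulmxA.
rewrite P0_cv4 jacobian_Xf_mul tr_jacobian_Xf_mul !scale_cv4 mulmxDr !P0_cv4.
by rewrite add_cv4; congr cv4; ring.
Qed.

Lemma Nstar_dHSK (a w : R) z :
  Nstar z *m dif (HSK a w) z
    = (cx z / s2) *: dif (HSK a w) z + (cy z / s2) *: dif (FSK a w) z.
Proof. by rewrite dif_HSK dif_FSK Nstar_cv4 !scale_cv4 add_cv4; congr cv4; ring. Qed.

Lemma Nstar_dFSK (a w : R) z :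
  Nstar z *m dif (FSK a w) z
    = (cy z / s2) *: dif (HSK a w) z + (cx z / s2) *: dif (FSK a w) z.
Proof. by rewrite dif_HSK dif_FSK Nstar_cv4 !scale_cv4 add_cv4; congr cv4; ring. Qed.

Lemma char_poly_sym2 (S : comNzRingType) (p q : S) :
  char_poly (\matrix_(i, j) (if i == j then p else q) : 'M[S]_2)
    = ('X - (p + q)%:P) * ('X - (p - q)%:P).
Proof.
rewrite /char_poly (expand_det_row _ ord0) big_ord_recl big_ord1.
rewrite /cofactor !det_mx11 !mxE /=.
by rewrite /bump /= expr0 expr1 mulr1n mulr0n polyCD polyCB; ring.
Qed.

Lemma char_poly_control_matrix z :
  char_poly (control_matrix z) = ('X - (u1 z)%:P) * ('X - (u2 z)%:P).
Proof.
have -> : u1 z = cx z / s2 + cy z / s2 by rewrite /u1 mulrDl.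
have -> : u2 z = cx z / s2 - cy z / s2 by rewrite /u2 mulrBl.
exact: char_poly_sym2.
Qed.

Lemma liouville_form_uv z :
  cpx z *: dif (@cx R) z + cpy z *: dif (@cy R) z
    = v1 z *: dif (@u1 R) z + v2 z *: dif (@u2 R) z.
Proof.
rewrite dif_cx dif_cy dif_u1 dif_u2 !scale_cv4 !add_cv4 /v1 /v2 !mul_div_s2.
by rewrite !mulr0; congr cv4; field.
Qed.

Lemma HSK_FSK_split (a w : R) z :
  HSK a w z = Hi a w (u1 z) (v1 z) + Hi a w (u2 z) (v2 z) /\
  FSK a w z = Hi a w (u1 z) (v1 z) - Hi a w (u2 z) (v2 z).
Proof.
rewrite /HSK /FSK /Hi /u1 /u2 /v1 /v2 !sqr_div_s2 !cube_div_s2.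
by split; field; exact: s2_neq0.
Qed.

Definition hamiltonian_trajectory (H : 'cV[R]_4 -> R) (gamma : R -> 'cV[R]_4) :=
  forall (i : 'I_4) (t : R),
    derivable (fun s => gamma s i 0) t 1 /\
    derive1 (fun s => gamma s i 0) t = (P0 *m dif H (gamma t)) i 0.

Lemma hamiltonian_trajectory_is_derive H gamma (i : 'I_4) (t : R) :
  hamiltonian_trajectory H gamma ->
  is_derive t 1 (fun s => gamma s i 0) ((P0 *m dif H (gamma t)) i 0).
Proof. by move=> /(_ i t) [gamma_i <-]; rewrite derive1E; exact: derivableP. Qed.

Lemma is_derive_second_order (U V : R -> R) (t g : R) :
  (forall s : R, is_derive s 1 U (V s)) -> is_derive t 1 V g ->
  [/\ derivable U t 1, derivable (derive1 U) t 1 & derive1 (derive1 U) t = g].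
Proof.
move=> dU dV; have -> : derive1 U = V by apply/funext => s; rewrite derive1E derive_val.
by split; [exact: ex_derive | exact: ex_derive | rewrite derive1E derive_val].
Qed.

Lemma P0_dif_HSK (a w : R) z : P0 *m dif (HSK a w) z =
  cv4 (- (w * cx z + a * cx z ^+ 2 + a * cy z ^+ 2))
      (- (w * cy z + 2 * a * cx z * cy z)) (cpx z) (cpy z).
Proof. by rewrite dif_HSK P0_cv4. Qed.

Lemma normal_mode_equation (a w e : R) gamma (U : R -> R) :
  e ^+ 2 = 1 -> hamiltonian_trajectory (HSK a w) gamma ->
  (forall s, U s = (cx (gamma s) + e * cy (gamma s)) / s2) ->
  forall t : R, derivable U t 1 /\ derivable (derive1 U) t 1 /\
    derive1 (derive1 U) t + w * U t + s2 * a * U t ^+ 2 = 0.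
Proof.
move=> e_sqr traj U_gamma t.
have flow i s := hamiltonian_trajectory_is_derive i s traj.
(* dx, dy, dpx, dpy are consumed by instance resolution in [is_derive_eq]. *)
have dx (s : R) : is_derive s 1 (fun r => cx (gamma r)) (cpx (gamma s)).
  by have := flow ix s; rewrite P0_dif_HSK cv4E.
have dy (s : R) : is_derive s 1 (fun r => cy (gamma r)) (cpy (gamma s)).
  by have := flow iy s; rewrite P0_dif_HSK cv4E.
have dpx (s : R) : is_derive s 1 (fun r => cpx (gamma r))
    (- (w * cx (gamma s) + a * cx (gamma s) ^+ 2 + a * cy (gamma s) ^+ 2)).
  by have := flow ipx s; rewrite P0_dif_HSK cv4E.
have dpy (s : R) : is_derive s 1 (fun r => cpy (gamma r))
    (- (w * cy (gamma s) + 2 * a * cx (gamma s) * cy (gamma s))).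
  by have := flow ipy s; rewrite P0_dif_HSK cv4E.
have dU (s : R) : is_derive s 1 U ((cpx (gamma s) + e * cpy (gamma s)) / s2).
  by rewrite (funext U_gamma); apply: is_derive_eq; rewrite /GRing.scale /=; ring.
have dV : is_derive t 1 (fun s => (cpx (gamma s) + e * cpy (gamma s)) / s2)
    ((- (w * cx (gamma t) + a * cx (gamma t) ^+ 2 + a * cy (gamma t) ^+ 2)
      - e * (w * cy (gamma t) + 2 * a * cx (gamma t) * cy (gamma t))) / s2).
  by apply: is_derive_eq; rewrite /GRing.scale /=; ring.
have [dU_t dV_t ->] := is_derive_second_order dU dV.
split=> //; split=> //; rewrite U_gamma.
have /orP[/eqP-> | /eqP->] : (e == 1) || (e == -1) by rewrite -sqrf_eq1 e_sqr.
  by field; exact: s2_neq0.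
by field; exact: s2_neq0.
Qed.

End SK.

Theorem mainTheorem4 (R : realType) (a w : R) :
  (* N^* dH = x/sqrt2 dH + y/sqrt2 dF,  N^* dF = y/sqrt2 dH + x/sqrt2 dF *)
  (forall z : 'cV[R]_4,
     Nstar z *m dif (HSK a w) z
       = (cx z / s2) *: dif (HSK a w) z + (cy z / s2) *: dif (FSK a w) z /\
     Nstar z *m dif (FSK a w) z
       = (cy z / s2) *: dif (HSK a w) z + (cx z / s2) *: dif (FSK a w) z) /\
  (* eigenvalues of the control matrix are u1, u2 *)
  (forall z : 'cV[R]_4,
     char_poly (control_matrix z) = ('X - (u1 z)%:P) * ('X - (u2 z)%:P)) /\
  (* p_x dx + p_y dy = v1 du1 + v2 du2 *)
  (forall z : 'cV[R]_4,
     cpx z *: dif (@cx R) z + cpy z *: dif (@cy R) z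
       = v1 z *: dif (@u1 R) z + v2 z *: dif (@u2 R) z) /\
  (* H = H1 + H2, F = H1 - H2 *)
  (forall z : 'cV[R]_4,
     HSK a w z = Hi a w (u1 z) (v1 z) + Hi a w (u2 z) (v2 z) /\
     FSK a w z = Hi a w (u1 z) (v1 z) - Hi a w (u2 z) (v2 z)) /\
  (* along any solution of Hamilton's equations dz/dt = P0 dH, the u_i
     satisfy  u_i'' + w u_i + sqrt2 a u_i^2 = 0 *)
  (forall gamma : R -> 'cV[R]_4,
     (forall (i : 'I_4) (t : R),
        derivable (fun s => gamma s i 0) t 1 /\
        derive1 (fun s => gamma s i 0) t = (P0 *m dif (HSK a w) (gamma t)) i 0) ->
     forall t : R,
       let U1 := fun s => u1 (gamma s) in
       let U2 := fun s => u2 (gamma s) in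
       (derivable U1 t 1 /\ derivable (derive1 U1) t 1 /\
        derive1 (derive1 U1) t + w * U1 t + s2 * a * U1 t ^+ 2 = 0) /\
       (derivable U2 t 1 /\ derivable (derive1 U2) t 1 /\
        derive1 (derive1 U2) t + w * U2 t + s2 * a * U2 t ^+ 2 = 0)).
Proof.
split; first by move=> z; split; [exact: Nstar_dHSK | exact: Nstar_dFSK].
split; first exact: char_poly_control_matrix.
split; first exact: liouville_form_uv.
split; first exact: HSK_FSK_split.
move=> gamma traj t U1 U2; split.
- apply: (normal_mode_equation (e := 1)) traj _ _ => [|s]; first exact: expr1n.
  by rewrite /U1 /u1 mul1r.
- apply: (normal_mode_equation (e := -1)) traj _ _ => [|s]; first by rewrite sqrrN expr1n.
  by rewrite /U2 /u2 mulN1r.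
Qed.
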